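(* Let $G$ consist of two parallel paths $P_1,P_2$ from $s$ to $d$ with $\mathrm{len}(P_1)<\mathrm{len}(P_2)$ (so $P_1$ is the unique shortest path), and let $l_v=0$ for all vertices $v$. Let $g\in\mathcal F$ be non-linear, i.e. $g(x)\ne x$ for some $x\in[0,1/2]$. Then there exist a factor $\lambda>1$ (depending on $g$ and the path lengths), an initial input $f_0>0$, and an initial configuration (positive pheromone levels on all edges and nonnegative initial flows) such that, with inputs $f_s(t)=b_d(t)=\lambda^t f_0$ for all $t\ge0$, the dynamics governed by $g$ satisfies that $\nu^f_{ss_1}(t)$ does not converge to $1$ as $t\to\infty$.
   Context: Model. Directed graph $G=(V,E)$ with source $s$, destination $d$; discrete time $t=0,1,\dots$; pheromone levels $p_{uv}(t)\ge0$ on edges, forward flows $f_v(t)\ge0$ and backward flows $b_v(t)\ge0$ at vertices; leakage parameters $l_v\in[0,1]$ and decay parameter $\delta\in(0,1)$. $f_s(t)$ and $b_d(t)$ are exogenous inputs. Flow update: for $v\ne s$, $f_v(t+1)=(1-l_v)\sum_{z:(z,v)\in E}f_{zv}(t)$; for $u\ne d$, $b_u(t+1)=(1-l_u)\sum_{z:(u,z)\in E}b_{uz}(t)$; pheromone update $p_{uv}(t+1)=\delta(p_{uv}(t)+f_{uv}(t)+b_{uv}(t))$. Normalized pheromone levels $\nu^f_{uv}(t)=p_{uv}(t)/\sum_{z:(u,z)\in E}p_{uz}(t)$, $\nu^b_{uv}(t)=p_{uv}(t)/\sum_{z:(z,v)\in E}p_{zv}(t)$. $\mathrm{len}(P)$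 is the number of edges of $P$. Two parallel paths: $G$ is the union of two directed paths $P_1,P_2$ from $s$ to $d$ sharing only $s$ and $d$; $s_1,s_2$ are the successors of $s$ and $d_1,d_2$ the predecessors of $d$ on $P_1,P_2$. Family $\mathcal F$: continuous, monotonically non-decreasing functions $g:[0,1/2]\to[0,1]$ with $g(0)=0$ and $g(1/2)=1/2$. The dynamics governed by $g$: at every vertex of out-degree (resp. in-degree) one, the entire forward (resp. backward) flow goes along the unique edge; at $s$, with $x=\min(\nu^f_{ss_1}(t),\nu^f_{ss_2}(t))$, the edge attaining the minimum receives forward flow $g(x)f_s(t)$ and the other edge receives $(1-g(x))f_s(t)$ (if $x=1/2$ each receives $f_s(t)/2$); at $d$ the backward flow $b_d(t)$ is split between $(d_1,d)$ and $(d_2,d)$ in the same way using $\nu^b_{d_1d}(t),\nu^b_{d_2d}(t)$. The linear decision rule corresponds to $g(x)=x$. *)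

From Stdlib Require Import Reals Lra.
Open Scope R_scope.

(** The graph G is the union of two directed s-d paths P1, P2 of lengths
  [L1] and [L2] (number of edges) sharing only s and d.
  On path [i], the vertices are numbered 0 .. len i, with vertex 0 = s and
  vertex [len i] = d; vertices 1 .. len i - 1 are the internal vertices.
  Edge [k] of path [i] (0 <= k < len i) goes from vertex k to vertex k+1.
  So edge 0 is (s, s_i) and edge [len i - 1] is (d_i, d). *)

Inductive pid : Type := P1 | P2.

Definition other (i : pid) : pid := match i with P1 => P2 | P2 => P1 end.

Definition len (L1 L2 : nat) (i : pid) : nat :=
  match i with P1 => L1 | P2 => L2 end.

(** Configuration at a time step:
   - [pher i k] : pheromone level p on edge k of path i;
   - [fv i k], [bv i k] : forward / backward flow at internal vertex k of
     path i (1 <= k < len i).  (Other indices are irrelevant junk.) *)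
Record config : Type := Config {
  pher : pid -> nat -> R;
  fv   : pid -> nat -> R;
  bv   : pid -> nat -> R }.

(** Family F: g : [0,1/2] -> [0,1] continuous, non-decreasing,
    g(0) = 0, g(1/2) = 1/2.  (g is given as a total function R -> R; only
    its values on [0,1/2] matter.) *)
Definition in_F (g : R -> R) : Prop :=
  (forall x, 0 <= x <= 1/2 -> 0 <= g x <= 1) /\
  (forall x, 0 <= x <= 1/2 -> forall eps, 0 < eps -> exists dl, 0 < dl /\
      forall y, 0 <= y <= 1/2 -> Rabs (y - x) < dl -> Rabs (g y - g x) < eps) /\
  (forall x y, 0 <= x <= 1/2 -> 0 <= y <= 1/2 -> x <= y -> g x <= g y) /\
  g 0 = 0 /\ g (1/2) = 1/2.

Definition split_frac (g : R -> R) (nu_self nu_other : R) : R :=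
  if Rlt_dec nu_self nu_other then g nu_self
  else if Rlt_dec nu_other nu_self then 1 - g nu_other
  else 1/2.

Section Dynamics.
Variables (L1 L2 : nat) (delta : R) (g : R -> R) (l : pid -> nat -> R).

Definition nu_f (c : config) (i : pid) : R :=
  pher c i 0 / (pher c P1 0 + pher c P2 0).

Definition nu_b (c : config) (i : pid) : R :=
  pher c i (len L1 L2 i - 1)%nat /
  (pher c P1 (len L1 L2 P1 - 1)%nat + pher c P2 (len L1 L2 P2 - 1)%nat).

Definition fedge (c : config) (fs : R) (i : pid) (k : nat) : R :=
  if Nat.eqb k 0 then split_frac g (nu_f c i) (nu_f c (other i)) * fs
  else fv c i k.

Definition bedge (c : config) (bd : R) (i : pid) (k : nat) : R :=
  if Nat.eqb k (len L1 L2 i - 1)%nat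
  then split_frac g (nu_b c i) (nu_b c (other i)) * bd
  else bv c i (S k).

Definition step (c : config) (fs bd : R) : config :=
  Config
    (fun i k => delta * (pher c i k + fedge c fs i k + bedge c bd i k))
    (fun i k => (1 - l i k) * fedge c fs i (k - 1)%nat)
    (fun i k => (1 - l i k) * bedge c bd i k).

Fixpoint traj (fs bd : nat -> R) (c0 : config) (t : nat) : config :=
  match t with
  | O => c0
  | S t' => step (traj fs bd c0 t') (fs t') (bd t')
  end.

End Dynamics.

From Stdlib Require Import Reals Lra Lia.
Open Scope R_scope.

(** A non-linear [g] in the family F "favours the majority"
    at some scale: there are [0 < a < b <= 1] such that whenever an edge
    holds a normalized share [>= a], the split rule sends it a fraction
    [>= b] of the flow ([favours g a b]).  In the dip case [g x0 < x0] take
    [a = 1 - x0], [b = 1 - g x0]; in the bump case [g x0 > x0] take [a = x0],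
    [b = g x0].  We start with the long path P2 holding share [a] at both
    ends and flows that are already "b-dominant" on P2.  With inputs growing
    like [lam ^ t], a flow that entered k steps ago is worth its input
    divided by [lam ^ k]; we show by induction the invariant [regime]: P2
    keeps share [>= a] at s and at d, and the (rescaled) flows on P1, resp.
    P2, stay below [(1 - b)] times, resp. above [b] times, the current input.
    Preservation reduces to one inequality (lemma [balance_step]) which holds
    once [lam ^ (L2 - 1)] is small enough, and such a [lam > 1] exists since
    [a < b] (lemma [balance_factor]).  Then [nu_f P1 <= 1 - a] forever, so it
    cannot tend to [1]. *)

Lemma split_compl g x y : x + y = 1 -> split_frac g x y + split_frac g y x = 1.
Proof.
  intros H; unfold split_frac.
  destruct (Rlt_dec x y), (Rlt_dec y x); try lra; destruct (Rlt_dec x y); lra.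
Qed.

Lemma split_range g : in_F g -> forall x y, 0 <= x -> 0 <= y -> x + y = 1 ->
  0 <= split_frac g x y <= 1.
Proof.
  intros [Hr _] x y Hx Hy Hs; unfold split_frac.
  destruct (Rlt_dec x y); [apply Hr; lra|].
  destruct (Rlt_dec y x); [|lra].
  assert (0 <= g y <= 1) by (apply Hr; lra). lra.
Qed.

Lemma share_lower a p q : 0 < p -> 0 < q -> a * p <= (1 - a) * q -> a <= q / (p + q).
Proof.
  intros Hp Hq H.
  assert (E : q / (p + q) - a = ((1 - a) * q - a * p) * / (p + q)) by (field; lra).
  assert (0 <= ((1 - a) * q - a * p) * / (p + q)).
  { apply Rmult_le_pos; [lra|]. left; apply Rinv_0_lt_compat; lra. }
  lra.
Qed.

Lemma share_sum p q : 0 < p -> 0 < q -> p / (p + q) + q / (p + q) = 1.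
Proof. intros; field; lra. Qed.

Lemma share_nonneg p q : 0 < p -> 0 < q -> 0 <= p / (p + q).
Proof.
  intros; unfold Rdiv; apply Rmult_le_pos; [lra|].
  left; apply Rinv_0_lt_compat; lra.
Qed.

Definition favours (g : R -> R) (a b : R) : Prop :=
  forall x y, 0 <= x -> a <= y -> x + y = 1 -> b <= split_frac g y x.

Lemma nonlinear_favours g : in_F g -> (exists x, 0 <= x <= 1/2 /\ g x <> x) ->
  exists a b, 0 < a < 1 /\ a < b <= 1 /\ favours g a b.
Proof.
  intros Hg [x0 [Hx0 Hgx]].
  destruct Hg as (Hr & _ & Hm & Hg0 & Hg12).
  assert (Hx0' : 0 < x0 < 1/2).
  { split; destruct (Req_dec x0 0), (Req_dec x0 (1/2)); subst; lra. }
  pose proof (Hr x0 ltac:(lra)).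
  destruct (Rdichotomy _ _ Hgx) as [Hdip|Hbump].
  - exists (1 - x0), (1 - g x0). split; [lra|split; [lra|]].
    intros x y Hx Hy Hs; unfold split_frac.
    destruct (Rlt_dec y x); [lra|].
    destruct (Rlt_dec x y); [|lra].
    assert (g x <= g x0) by (apply Hm; lra). lra.
  - assert (g x0 <= 1/2) by (rewrite <- Hg12; apply Hm; lra).
    exists x0, (g x0). split; [lra|split; [lra|]].
    intros x y Hx Hy Hs; unfold split_frac.
    destruct (Rlt_dec y x); [apply Hm; lra|].
    destruct (Rlt_dec x y); [|lra].
    assert (g x <= 1/2) by (rewrite <- Hg12; apply Hm; lra). lra.
Qed.

(** The single inequality the invariant needs: the pheromone deposited on
    one end edge of P1 (two flows, each at most [(1 - b) L]) is outweighed,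
    in the ratio [a : 1 - a], by that deposited on P2, whose backward flow
    may be damped by [M = lam ^ (L2 - 1)]. *)
Lemma balance_step a b L M f1 b1 f2 b2 : 0 < a < 1 -> 0 < M -> 0 <= L ->
  f1 <= (1 - b) * L -> b1 <= (1 - b) * L -> b * L <= f2 -> b * L <= b2 * M ->
  M * (2 * a * (1 - b)) <= b * (1 - a) * (1 + M) ->
  a * (f1 + b1) <= (1 - a) * (f2 + b2).
Proof.
  intros Ha HM HL H1 H2 H3 H4 H5.
  apply Rmult_le_reg_r with M; [lra|].
  assert (a * (f1 + b1) * M <= a * (2 * (1 - b) * L) * M).
  { apply Rmult_le_compat_r; [lra|]. apply Rmult_le_compat_l; lra. }
  assert (L * (M * (2 * a * (1 - b))) <= L * (b * (1 - a) * (1 + M)))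
    by (apply Rmult_le_compat_l; lra).
  assert ((1 - a) * (b * L * M) <= (1 - a) * (f2 * M)).
  { apply Rmult_le_compat_l; [lra|]. apply Rmult_le_compat_r; lra. }
  assert ((1 - a) * (b * L) <= (1 - a) * (b2 * M)) by (apply Rmult_le_compat_l; lra).
  nra.
Qed.

(** For [a < b] a growth factor [lam > 1] satisfying the hypothesis of
    [balance_step] with [M = lam ^ n] exists: the coefficient
    [c = 2 a (1 - b) - b (1 - a)] is below [B = b (1 - a)], so [lam ^ n = B / D]
    works for any [D] with [max(c, B/2) <= D < B]. *)
Lemma balance_factor a b (n : nat) : 0 < a < 1 -> a < b <= 1 -> (0 < n)%nat ->
  exists lam, 1 < lam /\ lam ^ n * (2 * a * (1 - b)) <= b * (1 - a) * (1 + lam ^ n).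
Proof.
  intros Ha Hb Hn.
  set (B := b * (1 - a)).
  set (c := 2 * a * (1 - b) - B).
  set (D := Rmax c (B / 2)).
  assert (HB : 0 < B) by (unfold B; nra).
  assert (HcB : c < B) by (unfold c, B; nra).
  assert (HD : 0 < D) by (pose proof (Rmax_r c (B / 2)); unfold D in *; lra).
  assert (HDB : D < B) by (unfold D; apply Rmax_lub_lt; lra).
  assert (HcD : c <= D) by apply Rmax_l.
  set (K := B / D).
  assert (HK : 1 < K).
  { unfold K. apply Rmult_lt_reg_r with D; [lra|].
    unfold Rdiv. rewrite Rmult_assoc, Rinv_l; lra. }
  assert (HKD : K * D = B) by (unfold K; field; lra).
  assert (HnR : 0 < INR n) by (apply lt_0_INR; lia).
  exists (Rpower K (/ INR n)). split.
  - rewrite <- (Rpower_O K) by lra. apply Rpower_lt; [lra|].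
    apply Rinv_0_lt_compat; lra.
  - assert (Hpow : Rpower K (/ INR n) ^ n = K).
    { rewrite <- Rpower_pow by (apply exp_pos).
      rewrite Rpower_mult, Rinv_l by lra. apply Rpower_1; lra. }
    rewrite Hpow. fold B.
    assert (K * c <= K * D) by (apply Rmult_le_compat_l; lra).
    unfold c in *. nra.
Qed.

(** [regime] at input level [Lt]: all edges carry pheromone, P2 holds share
    at least [a] at both ends, and a flow at distance k from its source
    (which entered when the input was [Lt / lam ^ k]) is at most [(1 - b)]
    times that input on P1 and at least [b] times it on P2. *)
Definition regime (L1 L2 : nat) (a b lam : R) (c : config) (Lt : R) : Prop :=
  (forall i k, (k < len L1 L2 i)%nat -> 0 < pher c i k) /\
  a * pher c P1 0 <= (1 - a) * pher c P2 0 /\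
  a * pher c P1 (L1 - 1) <= (1 - a) * pher c P2 (L2 - 1) /\
  (forall k, (1 <= k < L1)%nat ->
     0 <= fv c P1 k /\ fv c P1 k * lam ^ k <= (1 - b) * Lt /\
     0 <= bv c P1 k /\ bv c P1 k * lam ^ (L1 - k) <= (1 - b) * Lt) /\
  (forall k, (1 <= k < L2)%nat ->
     b * Lt <= fv c P2 k * lam ^ k /\ b * Lt <= bv c P2 k * lam ^ (L2 - k)).

Section Preservation.
Variables (L1 L2 : nat) (delta : R) (g : R -> R) (a b lam : R).
Hypothesis HL1 : (1 <= L1)%nat.
Hypothesis HL12 : (L1 < L2)%nat.
Hypothesis Hdelta : 0 < delta.
Hypothesis Hg : in_F g.
Hypothesis Ha : 0 < a < 1.
Hypothesis Hb : 0 < b <= 1.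
Hypothesis Hlam : 1 < lam.
Hypothesis Hfav : favours g a b.
Hypothesis Hbal : lam ^ (L2 - 1) * (2 * a * (1 - b)) <= b * (1 - a) * (1 + lam ^ (L2 - 1)).

Lemma lam_pow_pos n : 0 < lam ^ n.
Proof. apply pow_lt; lra. Qed.

Lemma lam_pow_ge1 n : 1 <= lam ^ n.
Proof. apply pow_R1_Rle; lra. Qed.

Lemma split_bounds p q : 0 < p -> 0 < q -> a * p <= (1 - a) * q ->
  0 <= split_frac g (p / (p + q)) (q / (p + q)) <= 1 - b /\
  b <= split_frac g (q / (p + q)) (p / (p + q)) <= 1.
Proof.
  intros Hp Hq H.
  pose proof (share_sum p q Hp Hq) as E.
  assert (E' : q / (p + q) + p / (p + q) = 1) by lra.
  pose proof (share_nonneg p q Hp Hq) as Sp.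
  pose proof (share_nonneg q p Hq Hp) as Sq. rewrite Rplus_comm in Sq.
  pose proof (split_compl g _ _ E).
  pose proof (split_range g Hg _ _ Sp Sq E).
  pose proof (split_range g Hg _ _ Sq Sp E').
  pose proof (Hfav _ _ Sp (share_lower a p q Hp Hq H) E).
  lra.
Qed.

Section OneStep.
Variables (c : config) (Lt : R).
Hypothesis HI : regime L1 L2 a b lam c Lt.
Hypothesis HLt : 0 < Lt.

Lemma source_split_bounds :
  (0 <= split_frac g (nu_f c P1) (nu_f c P2) <= 1 - b /\
   b <= split_frac g (nu_f c P2) (nu_f c P1) <= 1) /\
  (0 <= split_frac g (nu_b L1 L2 c P1) (nu_b L1 L2 c P2) <= 1 - b /\
   b <= split_frac g (nu_b L1 L2 c P2) (nu_b L1 L2 c P1) <= 1).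
Proof.
  destruct HI as (Hp & Hs & Hd & _).
  unfold nu_f, nu_b; simpl.
  split; apply split_bounds; try assumption; apply Hp; simpl; lia.
Qed.

Lemma edge_flows_P1 k : (k < L1)%nat ->
  0 <= fedge g c Lt P1 k /\ fedge g c Lt P1 k * lam ^ k <= (1 - b) * Lt /\
  0 <= bedge L1 L2 g c Lt P1 k /\
  bedge L1 L2 g c Lt P1 k * lam ^ (L1 - 1 - k) <= (1 - b) * Lt.
Proof.
  intros Hk. destruct HI as (_ & _ & _ & H1 & _).
  destruct source_split_bounds as [Sf Sb].
  unfold fedge, bedge; simpl.
  split; [|split; [|split]].
  - destruct k as [|k]; simpl; [nra|apply (H1 (S k)); lia].
  - destruct k as [|k]; simpl; [nra|apply (H1 (S k)); lia].
  - destruct (Nat.eqb_spec k (L1 - 1)); [nra|apply (H1 (S k)); lia].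
  - destruct (Nat.eqb_spec k (L1 - 1)) as [->|].
    + rewrite Nat.sub_diag; simpl; nra.
    + replace (L1 - 1 - k)%nat with (L1 - S k)%nat by lia. apply (H1 (S k)); lia.
Qed.

Lemma edge_flows_P2 k : (k < L2)%nat ->
  b * Lt <= fedge g c Lt P2 k * lam ^ k /\
  b * Lt <= bedge L1 L2 g c Lt P2 k * lam ^ (L2 - 1 - k).
Proof.
  intros Hk. destruct HI as (_ & _ & _ & _ & H2).
  destruct source_split_bounds as [Sf Sb].
  unfold fedge, bedge; simpl.
  split.
  - destruct k as [|k]; simpl; [nra|apply (H2 (S k)); lia].
  - destruct (Nat.eqb_spec k (L2 - 1)) as [->|].
    + rewrite Nat.sub_diag; simpl; nra.
    + replace (L2 - 1 - k)%nat with (L2 - S k)%nat by lia. apply (H2 (S k)); lia.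
Qed.

Lemma edge_flows_P2_nonneg k : (k < L2)%nat ->
  0 <= fedge g c Lt P2 k /\ 0 <= bedge L1 L2 g c Lt P2 k.
Proof.
  intros Hk. destruct (edge_flows_P2 k Hk).
  pose proof (lam_pow_pos k). pose proof (lam_pow_pos (L2 - 1 - k)).
  assert (0 < b * Lt) by nra. split; nra.
Qed.

Let c' := step L1 L2 delta g (fun _ _ => 0) c Lt Lt.

(** Pheromone stays positive: it only grows by nonnegative deposits. *)
Lemma step_pher_pos i k : (k < len L1 L2 i)%nat -> 0 < pher c' i k.
Proof.
  destruct HI as (Hp & _). unfold c'; simpl.
  destruct i; intros Hk; specialize (Hp _ k Hk); simpl in Hk.
  - destruct (edge_flows_P1 k Hk) as (? & _ & ? & _). apply Rmult_lt_0_compat; lra.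
  - destruct (edge_flows_P2_nonneg k Hk). apply Rmult_lt_0_compat; lra.
Qed.

Lemma step_balance_source : a * pher c' P1 0 <= (1 - a) * pher c' P2 0.
Proof.
  destruct HI as (_ & Hs & _).
  destruct (edge_flows_P1 0 ltac:(lia)) as (X1 & X2 & X3 & X4).
  destruct (edge_flows_P2 0 ltac:(lia)) as (Y1 & Y2).
  rewrite Nat.sub_0_r in X4, Y2. rewrite pow_O, Rmult_1_r in X2, Y1.
  pose proof (lam_pow_ge1 (L1 - 1)).
  assert (bedge L1 L2 g c Lt P1 0 <= (1 - b) * Lt) by nra.
  pose proof (balance_step a b Lt (lam ^ (L2 - 1))
    (fedge g c Lt P1 0) (bedge L1 L2 g c Lt P1 0)
    (fedge g c Lt P2 0) (bedge L1 L2 g c Lt P2 0) Ha (lam_pow_pos (L2 - 1))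
    ltac:(lra) ltac:(lra) ltac:(lra) ltac:(lra) Y2 Hbal).
  unfold c'; cbn [pher step]. nra.
Qed.

Lemma step_balance_dest : a * pher c' P1 (L1 - 1) <= (1 - a) * pher c' P2 (L2 - 1).
Proof.
  destruct HI as (_ & _ & Hd & _).
  destruct (edge_flows_P1 (L1 - 1) ltac:(lia)) as (X1 & X2 & X3 & X4).
  destruct (edge_flows_P2 (L2 - 1) ltac:(lia)) as (Y1 & Y2).
  rewrite Nat.sub_diag, pow_O, Rmult_1_r in X4, Y2.
  pose proof (lam_pow_ge1 (L1 - 1)).
  assert (fedge g c Lt P1 (L1 - 1) <= (1 - b) * Lt) by nra.
  pose proof (balance_step a b Lt (lam ^ (L2 - 1))
    (bedge L1 L2 g c Lt P1 (L1 - 1)) (fedge g c Lt P1 (L1 - 1))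
    (bedge L1 L2 g c Lt P2 (L2 - 1)) (fedge g c Lt P2 (L2 - 1)) Ha (lam_pow_pos (L2 - 1))
    ltac:(lra) ltac:(lra) ltac:(lra) ltac:(lra) Y1 Hbal).
  unfold c'; cbn [pher step]. nra.
Qed.

(** Flows move one vertex per step while the input grows by [lam]. *)
Lemma step_flows_P1 k : (1 <= k < L1)%nat ->
  0 <= fv c' P1 k /\ fv c' P1 k * lam ^ k <= (1 - b) * (lam * Lt) /\
  0 <= bv c' P1 k /\ bv c' P1 k * lam ^ (L1 - k) <= (1 - b) * (lam * Lt).
Proof.
  intros Hk. unfold c'; simpl. rewrite Rminus_0_r, !Rmult_1_l.
  destruct k as [|k]; [lia|].
  replace (S k - 1)%nat with k by lia.
  destruct (edge_flows_P1 k ltac:(lia)) as (X1 & X2 & _).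
  destruct (edge_flows_P1 (S k) ltac:(lia)) as (_ & _ & X3 & X4).
  replace (L1 - S k)%nat with (S (L1 - 1 - S k)) by lia. simpl pow.
  split; [lra|split; [nra|split; [lra|nra]]].
Qed.

Lemma step_flows_P2 k : (1 <= k < L2)%nat ->
  b * (lam * Lt) <= fv c' P2 k * lam ^ k /\
  b * (lam * Lt) <= bv c' P2 k * lam ^ (L2 - k).
Proof.
  intros Hk. unfold c'; simpl. rewrite Rminus_0_r, !Rmult_1_l.
  destruct k as [|k]; [lia|].
  replace (S k - 1)%nat with k by lia.
  destruct (edge_flows_P2 k ltac:(lia)) as (X1 & _).
  destruct (edge_flows_P2 (S k) ltac:(lia)) as (_ & X4).
  replace (L2 - S k)%nat with (S (L2 - 1 - S k)) by lia. simpl pow.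
  split; nra.
Qed.

Lemma regime_step : regime L1 L2 a b lam c' (lam * Lt).
Proof.
  split; [exact step_pher_pos|].
  split; [exact step_balance_source|].
  split; [exact step_balance_dest|].
  split; [exact step_flows_P1|exact step_flows_P2].
Qed.

End OneStep.

Lemma regime_traj c0 f0 : 0 < f0 -> regime L1 L2 a b lam c0 f0 -> forall t,
  regime L1 L2 a b lam
    (traj L1 L2 delta g (fun _ _ => 0) (fun t => lam ^ t * f0) (fun t => lam ^ t * f0) c0 t)
    (lam ^ t * f0).
Proof.
  intros Hf0 H0. induction t as [|t IH]; simpl.
  - rewrite Rmult_1_l; exact H0.
  - rewrite Rmult_assoc. apply regime_step; [exact IH|].
    pose proof (lam_pow_pos t). nra.
Qed.

Definition start_config (a : R) : config :=
  Config (fun i _ => match i with P1 => 1 - a | P2 => a end)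
         (fun i _ => match i with P1 => 0 | P2 => 1 end)
         (fun i _ => match i with P1 => 0 | P2 => 1 end).

Lemma regime_start : regime L1 L2 a b lam (start_config a) 1.
Proof.
  unfold regime; simpl. split; [|split; [|split; [|split]]].
  - intros [|] k _; lra.
  - nra.
  - nra.
  - intros k _. pose proof (lam_pow_ge1 k). pose proof (lam_pow_ge1 (L1 - k)). nra.
  - intros k _. pose proof (lam_pow_ge1 k). pose proof (lam_pow_ge1 (L2 - k)). nra.
Qed.

End Preservation.

Lemma regime_nu_f_bound L1 L2 a b lam c Lt : (1 <= L1)%nat -> (L1 < L2)%nat ->
  regime L1 L2 a b lam c Lt -> nu_f c P1 <= 1 - a.
Proof.
  intros HL1 HL12 (Hp & Hs & _).
  assert (H1 := Hp P1 0%nat ltac:(simpl; lia)).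
  assert (H2 := Hp P2 0%nat ltac:(simpl; lia)).
  pose proof (share_lower a _ _ H1 H2 Hs).
  pose proof (share_sum _ _ H1 H2).
  unfold nu_f. lra.
Qed.

Lemma bounded_not_cv_1 (u : nat -> R) a : 0 < a -> (forall t, u t <= 1 - a) -> ~ Un_cv u 1.
Proof.
  intros Ha Hu HU. destruct (HU a Ha) as [N HN].
  specialize (HN N (le_n N)). specialize (Hu N). unfold R_dist in HN.
  rewrite Rabs_left in HN; lra.
Qed.

Theorem proposition3 (L1 L2 : nat) (delta : R) (g : R -> R) :
  (1 <= L1)%nat -> (L1 < L2)%nat ->
  0 < delta < 1 ->
  in_F g ->
  (exists x, 0 <= x <= 1/2 /\ g x <> x) ->
  exists (lam f0 : R) (c0 : config),
    1 < lam /\ 0 < f0 /\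
    (forall i k, (k < len L1 L2 i)%nat -> 0 < pher c0 i k) /\
    (forall i k, (1 <= k < len L1 L2 i)%nat -> 0 <= fv c0 i k /\ 0 <= bv c0 i k) /\
    ~ Un_cv (fun t : nat =>
          nu_f (traj L1 L2 delta g (fun _ _ => 0)
                  (fun t => lam ^ t * f0) (fun t => lam ^ t * f0) c0 t) P1)
        1.
Proof.
  intros HL1 HL12 Hdelta Hg Hnonlin.
  destruct (nonlinear_favours g Hg Hnonlin) as (a & b & Ha & Hab & Hfav).
  destruct (balance_factor a b (L2 - 1) Ha Hab ltac:(lia)) as (lam & Hlam & Hbal).
  assert (Hstart : regime L1 L2 a b lam (start_config a) 1) by (apply regime_start; lra).
  exists lam, 1, (start_config a).
  split; [exact Hlam|split; [lra|split; [|split]]].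
  - intros [|] k _; simpl; lra.
  - intros [|] k _; simpl; lra.
  - apply bounded_not_cv_1 with a; [lra|]. intros t.
    apply (regime_nu_f_bound L1 L2 a b lam _ (lam ^ t * 1)); try assumption.
    apply regime_traj; try assumption; lra.
Qed.
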